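(* Let $\overline{G}$ be the roommate diversity game with red agents $R=\{r_1,r_2,r_3\}$, blue agents $B=\{b_1,\dots,b_6\}$, room size $3$, and the trichotomous preferences described in the context. Then every outcome $\pi$ of $\overline{G}$ satisfies $|D_\pi^n\cup D_\pi^-|\ge 2$, i.e. at least two agents are in a room whose fraction they do not approve of.
   Context: In a roommate diversity game with agent set $N=R\cup B$ ($R$ red, $B$ blue) and room size $s$, an outcome is a partition of $N$ into rooms of size $s$; $\pi(a)$ is the room containing $a$ and $\theta(C)=|C\cap R|/|C|$ is the fraction of red agents in room $C$. Each agent $a$ has a trichotomous preference given by a partition of the fractions into sets $D_a^+$ (approved), $D_a^n$ (neutral), $D_a^-$ (disapproved), possibly empty, with every approved fraction strictly preferred to every neutral one, every neutral one strictly preferred to every disapproved one, and indifference within each set. For an outcome $\pi$, $D_\pi^+=\{a:\theta(\pi(a))\in D_a^+\}$, and $D_\pi^n$, $D_\pi^-$ are defined analogously. The game $\overline{G}$: $s=3$, and fractions are in $\{0,1/3,2/3,1\}$; $r_1$: $D^+=\{1/3\}$, $D^-=\{2/3,1\}$; $r_2,r_3$: $D^+=\{2/3\}$, $D^-=\{1/3,1\}$; $b_1,b_2,b_3,b_4$: $D^+=\{1/3\}$, $D^n=\{2/3\}$, $D^-=\{0\}$; $b_5,b_6$: $D^+=\{0\}$, $D^-=\{1/3,2/3\}$. (Fractions not listed for an agent are impossible for its color: a red agent is never in a room of fraction $0$, a blue agent never in a room of fraction $1$.) *)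

From mathcomp Require Import all_boot all_order all_algebra.
Set Implicit Arguments. Unset Strict Implicit. Unset Printing Implicit Defensive.
Import Order.TTheory GRing.Theory Num.Theory.
Local Open Scope ring_scope.

(* The game \overline{G}: agents are 'I_9.
   Indices 0,1,2 are r_1,r_2,r_3 (red); indices 3..8 are b_1..b_6 (blue). *)
Definition agent := 'I_9.
Definition red : {set agent} := [set a : agent | (a < 3)%N].
Definition blue : {set agent} := ~: red.

Definition s : nat := 3.

Definition outcome (P : {set {set agent}}) : Prop :=
  partition P [set: agent] /\ forall C, C \in P -> #|C| = s.

Definition room (P : {set {set agent}}) (a : agent) : {set agent} := pblock P a.

Definition theta (C : {set agent}) : rat := (#|C :&: red|)%:R / (#|C|)%:R.

Definition Dplus (a : agent) : pred rat :=
  match nat_of_ord a with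
  | 0 => pred1 (1/3)
  | 1 | 2 => pred1 (2/3)
  | 3 | 4 | 5 | 6 => pred1 (1/3)
  | _ => pred1 0
  end.

Definition Dneutral (a : agent) : pred rat :=
  match nat_of_ord a with
  | 3 | 4 | 5 | 6 => pred1 (2/3)
  | _ => pred0
  end.

Definition Dminus (a : agent) : pred rat :=
  match nat_of_ord a with
  | 0 => [pred x | (x == 2/3) || (x == 1)]
  | 1 | 2 => [pred x | (x == 1/3) || (x == 1)]
  | 3 | 4 | 5 | 6 => pred1 0
  | _ => [pred x | (x == 1/3) || (x == 2/3)]
  end.

Definition Dpi_plus (P : {set {set agent}}) : {set agent} :=
  [set a | Dplus a (theta (room P a))].
Definition Dpi_neutral (P : {set {set agent}}) : {set agent} :=
  [set a | Dneutral a (theta (room P a))].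
Definition Dpi_minus (P : {set {set agent}}) : {set agent} :=
  [set a | Dminus a (theta (room P a))].

From mathcomp Require Import all_boot all_order all_algebra.
Set Implicit Arguments. Unset Strict Implicit. Unset Printing Implicit Defensive.

(* Only r_2 and r_3 approve of a room with two reds.  If neither of them is in
   such a room, both are unhappy.  Otherwise that room also holds a blue agent,
   who is unhappy since no blue agent approves 2/3.  Then either r_1 is in the
   room too and disapproves 2/3, or all reds are in two rooms.  These hold six
   agents, while seven agents approve a positive number of reds; one of them
   therefore sits in a red-free room and is unhappy as well. *)

Lemma card_ord_count n (A : {pred 'I_n}) (p : pred nat) :
  (forall i : 'I_n, (i \in A) = p i) -> #|A| = count p (iota 0 n).
Proof.
move=> Ap; rewrite cardE /enum_mem size_filter -enumT -val_enum_ord count_map.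
by apply: eq_count => i; rewrite /preim /= -Ap.
Qed.

Definition r1 : agent := @Ordinal 9 0 isT.
Definition r2 : agent := @Ordinal 9 1 isT.
Definition r3 : agent := @Ordinal 9 2 isT.

Definition nreds (C : {set agent}) : nat := #|C :&: red|.

(* [D_a^+ = {approved_nreds a / 3}]. *)
Definition approved_nreds (a : agent) : nat :=
  match nat_of_ord a with 0 => 1 | 1 | 2 => 2 | 3 | 4 | 5 | 6 => 1 | _ => 0 end.

Definition unapproved (P : {set {set agent}}) : {set agent} :=
  Dpi_neutral P :|: Dpi_minus P.

Lemma card_red : #|red| = 3.
Proof. by apply: (card_ord_count (p := fun n => n < 3)) => i; rewrite inE. Qed.

Lemma card_approved_nreds_gt0 : #|[set a : agent | 0 < approved_nreds a]| = 7.
Proof.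
apply: (card_ord_count (p := fun n => n < 7)) => i; rewrite inE.
by case: i => [[|[|[|[|[|[|[|[|[|//]]]]]]]]] ?].
Qed.

Lemma approved_nreds_blue a : a \in blue -> approved_nreds a <= 1.
Proof. by rewrite !inE; case: a => [[|[|[|[|[|[|[|[|[|//]]]]]]]]] ?]. Qed.

Lemma unapproved_fraction a k :
  k <= 3 -> (a \in red -> 0 < k) -> (a \in blue -> k <= 2) ->
  k != approved_nreds a -> Dneutral a (k%:R / 3%:R)%R || Dminus a (k%:R / 3%:R)%R.
Proof.
rewrite !inE; case: a => [[|[|[|[|[|[|[|[|[|//]]]]]]]]] ?];
by case: k => [|[|[|[|//]]]] //= _ _ _ _; vm_compute.
Qed.

Section Outcome.

Variable P : {set {set agent}}.
Hypothesis outP : outcome P.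

Let coverP : cover P = [set: agent].
Proof. by case: outP => /and3P[/eqP]. Qed.

Let trivP : trivIset P.
Proof. by case: outP => /and3P[]. Qed.

Lemma mem_room a : a \in room P a.
Proof. by rewrite mem_pblock coverP inE. Qed.

Lemma card_room a : #|room P a| = 3.
Proof. by case: outP => _; apply; rewrite pblock_mem // coverP inE. Qed.

Lemma room_eq a b : b \in room P a -> room P b = room P a.
Proof. exact: same_pblock. Qed.

Lemma room_meet_mem a b c : c \in room P a -> c \in room P b -> a \in room P b.
Proof. by move=> ca cb; rewrite -(room_eq cb) (room_eq ca) mem_room. Qed.

Lemma blue_in_roomP a :
  reflect (exists2 b, b \in room P a & b \in blue) (nreds (room P a) < 3).
Proof.
rewrite -subn_gt0 -[X in 0 < X - _](card_room a) -cardsD.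
apply: (iffP card_gt0P) => -[b].
  by rewrite !inE => /andP[bNr ba]; exists b; rewrite ?inE.
by move=> ba; rewrite inE => bNr; exists b; rewrite inE ba andbT.
Qed.

Lemma unapproved_nreds a :
  nreds (room P a) != approved_nreds a -> a \in unapproved P.
Proof.
move=> neq_a; rewrite !inE /theta card_room.
apply: unapproved_fraction neq_a.
- by rewrite -(card_room a) subset_leq_card ?subsetIl.
- by move=> ar; apply/card_gt0P; exists a; rewrite inE mem_room.
- by move=> ab; apply/blue_in_roomP; exists a; rewrite ?mem_room.
Qed.

Lemma red_sub_rooms a :
  nreds (room P a) = 2 -> r1 \notin room P a -> red \subset room P r1 :|: room P a.
Proof.
move=> two r1Na.
have card_red1 : #|red :\ r1| = 2 by move: card_red; rewrite (cardsD1 r1) inE => -[].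
have sub_red1 : room P a :&: red \subset red :\ r1.
  apply/subsetP => y; rewrite !inE => /andP[ya ->]; rewrite andbT.
  by apply: contraNneq r1Na => <-.
have red1E : room P a :&: red = red :\ r1.
  by apply/eqP; rewrite eqEcard sub_red1 card_red1 -/(nreds _) two.
apply/subsetP => y yr; rewrite inE.
have [->|yNr1] := eqVneq y r1; first by rewrite mem_room.
have : y \in red :\ r1 by rewrite in_setD1 yNr1.
by rewrite -red1E inE => /andP[->]; rewrite orbT.
Qed.

Lemma unapproved_outside_rooms a c :
  red \subset room P a :|: room P c ->
  exists2 x, x \in unapproved P & x \notin room P a :|: room P c.
Proof.
move=> red_sub.
have : ~~ ([set x : agent | 0 < approved_nreds x] \subset room P a :|: room P c).
  apply/negP => /subset_leq_card; rewrite card_approved_nreds_gt0; apply/negP.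
  by rewrite -ltnNge (leq_ltn_trans (leq_card_setU _ _)) // !card_room.
case/subsetPn => x; rewrite inE => x_pos xND; exists x => //.
have x_red_free : nreds (room P x) = 0.
  apply/eqP; rewrite cards_eq0; apply/set0Pn => -[y]; rewrite inE => /andP[yx yr].
  have := subsetP red_sub y yr; rewrite inE => /orP[ya|yc]; apply: (negP xND).
  - by rewrite inE (room_meet_mem yx ya).
  - by rewrite inE (room_meet_mem yx yc) orbT.
by apply: unapproved_nreds; rewrite x_red_free eq_sym -lt0n.
Qed.

Lemma two_reds_room_unapproved a : nreds (room P a) = 2 -> 1 < #|unapproved P|.
Proof.
move=> two; apply/card_gt1P.
have [b ba bb] : exists2 b, b \in room P a & b \in blue by apply/blue_in_roomP; rewrite two.
have bU : b \in unapproved P.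
  apply: unapproved_nreds; rewrite /nreds (room_eq ba) -/(nreds _) two.
  by case: (approved_nreds b) (approved_nreds_blue bb) => [|[|]].
have [r1a | r1Na] := boolP (r1 \in room P a).
  exists r1, b; split=> //; last by apply: contraTneq bb => <-; rewrite !inE.
  by apply: unapproved_nreds; rewrite /nreds (room_eq r1a) -/(nreds _) two.
have [x xU xN] := unapproved_outside_rooms (red_sub_rooms two r1Na).
exists x, b; split=> //; apply: contraNneq xN => ->.
by rewrite inE ba orbT.
Qed.

End Outcome.

Theorem mainTheorem6 (P : {set {set agent}}) :
  outcome P -> (2 <= #|Dpi_neutral P :|: Dpi_minus P|)%N.
Proof.
move=> outP.
have [r2_two | r2_not_two] := eqVneq (nreds (room P r2)) 2.
  exact: two_reds_room_unapproved outP _ r2_two.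
have [r3_two | r3_not_two] := eqVneq (nreds (room P r3)) 2.
  exact: two_reds_room_unapproved outP _ r3_two.
by apply/card_gt1P; exists r2, r3; split=> //; apply: unapproved_nreds.
Qed.
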